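(* Let $p$ be an odd prime and $G=\langle a,b : (a[a^p,b])^p,\ b^p\rangle$. Then $a^p\neq 1$ in $G$; consequently the epimorphism $G\to C_p*C_p=\langle\alpha,\beta:\alpha^p,\beta^p\rangle$, $a\mapsto\alpha$, $b\mapsto\beta$, has nontrivial kernel, and $G$ is not residually nilpotent.
   Context: Commutator convention: $[x,y]=x^{-1}y^{-1}xy$. A group $G$ is residually nilpotent if $\bigcap_k\gamma_k(G)=\{1\}$, where $\gamma_1(G)=G$, $\gamma_k(G)=[G,\gamma_{k-1}(G)]$. *)

From Stdlib Require Import List.
From mathcomp Require Import all_boot.
Set Implicit Arguments. Unset Strict Implicit.

Record group := Group {
  carrier :> Type;
  gmul : carrier -> carrier -> carrier;
  gone : carrier;
  ginv : carrier -> carrier;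
  gmulA : forall x y z, gmul x (gmul y z) = gmul (gmul x y) z;
  gmul1 : forall x, gmul gone x = x;
  gmulV : forall x, gmul (ginv x) x = gone
}.

Section Ops.
Variable G : group.
Fixpoint gpow (x : G) (n : nat) : G :=
  match n with 0 => gone G | S k => gmul x (gpow x k) end.
Definition gcomm (x y : G) : G :=
  gmul (gmul (gmul (ginv x) (ginv y)) x) y.

Inductive gen (S : G -> Prop) : G -> Prop :=
| gen_in x : S x -> gen S x
| gen_one : gen S (gone G)
| gen_mul x y : gen S x -> gen S y -> gen S (gmul x y)
| gen_inv x : gen S x -> gen S (ginv x).

(* lower central series: gamma 1 = G, gamma (k+1) = [G, gamma k];
   we set gamma 0 = G as well (harmless) *)
Fixpoint gamma (k : nat) : G -> Prop :=
  match k with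
  | 0 | 1 => fun _ => True
  | S k' => gen (fun z => exists x y, gamma k' y /\ z = gcomm x y)
  end.

Definition residually_nilpotent : Prop :=
  forall g : G, (forall k, 1 <= k -> gamma k g) -> g = gone G.
End Ops.

Definition is_hom (G H : group) (f : G -> H) : Prop :=
  forall x y, f (gmul x y) = gmul (f x) (f y).

(* A two-generator relator: a word in two letters, evaluated uniformly
   in every group. *)
Definition relator2 := forall H : group, H -> H -> H.

Definition presents2 (G : group) (a b : G) (rels : list relator2) : Prop :=
  (forall r, List.In r rels -> r G a b = gone G) /\
  (forall (H : group) (x y : H),
      (forall r, List.In r rels -> r H x y = gone H) ->
      exists f : G -> H, is_hom f /\ f a = x /\ f b = y /\
        forall g : G -> H, is_hom g -> g a = x -> g b = y -> forall z, g z = f z).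

Definition rel_G1 (p : nat) : relator2 :=
  fun H a b => gpow (gmul a (gcomm (gpow a p) b)) p.
Definition rel_b (p : nat) : relator2 := fun H a b => gpow b p.
Definition rel_a (p : nat) : relator2 := fun H a b => gpow a p.

(* If (a [a^n, b])^n = 1 then a^n lies in every term of the lower central
   series: once a^n is in gamma_k, the commutator u = [a^n, b] is in
   gamma_(k+1), and expanding (a u)^n = a^n w with w in the normal subgroup
   gamma_(k+1) gives a^n = w^-1.  So G is residually nilpotent only if
   a^n = 1.  That a^n <> 1 is seen in a finite quotient: with
   m = n^n - (n-1)^n and w = (n-1)/n in Z/m, the affine maps x : v |-> v + 1
   and y : v |-> w v satisfy y^n = 1 (as (n-1)^n = n^n mod m),
   x^n y x = y x^n (as w n + 1 = n), i.e. x [x^n, y] = 1, and x^n <> 1. *)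
From mathcomp Require Import all_boot ssralg finalg zmodp fingroup perm zify.
Import GRing.Theory.

Set Implicit Arguments.
Unset Strict Implicit.
Unset Printing Implicit Defensive.

Section GroupIdentities.
Variable G : group.
Implicit Types x y : G.

Lemma gmulKg x y : gmul (ginv x) (gmul x y) = y.
Proof. by rewrite gmulA gmulV gmul1. Qed.

Lemma gmulgV x : gmul x (ginv x) = gone G.
Proof.
rewrite -[LHS](gmulKg (ginv x)) (gmulA (ginv x)) gmulV gmul1.
exact: gmulV.
Qed.

Lemma gmulg1 x : gmul x (gone G) = x.
Proof. by rewrite -(gmulV x) gmulA gmulgV gmul1. Qed.

Lemma gmulKVg x y : gmul x (gmul (ginv x) y) = y.
Proof. by rewrite gmulA gmulgV gmul1. Qed.

Lemma ginv_eq x y : gmul x y = gone G -> ginv x = y.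
Proof. by move=> xy1; rewrite -(gmulg1 (ginv x)) -xy1 gmulKg. Qed.

Lemma ginvK x : ginv (ginv x) = x.
Proof. by apply: ginv_eq; rewrite gmulV. Qed.

Lemma ginvM x y : ginv (gmul x y) = gmul (ginv y) (ginv x).
Proof. by apply: ginv_eq; rewrite -gmulA gmulKVg gmulgV. Qed.

Lemma ginv1 : ginv (gone G) = gone G.
Proof. by apply: ginv_eq; rewrite gmul1. Qed.

Lemma gpow1g n : gpow (gone G) n = gone G.
Proof. by elim: n => //= n ->; rewrite gmul1. Qed.

End GroupIdentities.

Ltac gsimp := repeat rewrite ?ginvM ?ginvK ?ginv1 -?gmulA
  ?gmulKg ?gmulKVg ?gmulV ?gmulgV ?gmul1 ?gmulg1.

Definition gconj (G : group) (x g : G) : G := gmul (gmul (ginv g) x) g.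

Section Conjugation.
Variable G : group.
Implicit Types x y g : G.

Lemma ginv_gcomm x y : ginv (gcomm x y) = gcomm y x.
Proof. by rewrite /gcomm; gsimp. Qed.

Lemma gcomm1g y : gcomm (gone G) y = gone G.
Proof. by rewrite /gcomm; gsimp. Qed.

Lemma gconj1g g : gconj (gone G) g = gone G.
Proof. by rewrite /gconj; gsimp. Qed.

Lemma gconjM x y g : gconj (gmul x y) g = gmul (gconj x g) (gconj y g).
Proof. by rewrite /gconj; gsimp. Qed.

Lemma gconjV x g : gconj (ginv x) g = ginv (gconj x g).
Proof. by rewrite /gconj; gsimp. Qed.

Lemma gconj_gcomm x y g : gconj (gcomm x y) g = gcomm (gconj x g) (gconj y g).
Proof. by rewrite /gconj /gcomm; gsimp. Qed.

End Conjugation.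

Section NormalPredicates.
Variables (G : group) (P : G -> Prop).
Hypotheses (P1 : P (gone G)) (PM : forall y z, P y -> P z -> P (gmul y z)).
Hypothesis PJ : forall x g, P x -> P (gconj x g).

Lemma gpow_mulr_normal x u k :
  P u -> exists2 w, P w & gpow (gmul x u) k = gmul (gpow x k) w.
Proof.
move=> Pu; elim: k => [|k [w Pw expand]] /=.
  by exists (gone G); rewrite ?gmul1.
rewrite expand; exists (gmul (gconj u (gpow x k)) w); first exact: PM (PJ _ Pu) Pw.
by rewrite /gconj; gsimp.
Qed.

End NormalPredicates.

Section LowerCentralSeries.
Variable G : group.
Implicit Types x y g : G.

Lemma gamma_one k : gamma k (gone G).
Proof. by case: k => [|[|k]] //=; apply: gen_one. Qed.

Lemma gamma_mul k x y : gamma k x -> gamma k y -> gamma k (gmul x y).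
Proof. by case: k => [|[|k]] //=; apply: gen_mul. Qed.

Lemma gamma_inv k x : gamma k x -> gamma k (ginv x).
Proof. by case: k => [|[|k]] //=; apply: gen_inv. Qed.

Lemma gamma_comm k x y : gamma k y -> gamma k.+1 (gcomm x y).
Proof. by case: k => [|k] // gy; apply: gen_in; exists x, y. Qed.

Lemma gamma_conj k x g : gamma k x -> gamma k (gconj x g).
Proof.
elim: k x => [|[|k] IH] x //= gx.
elim: gx => {x} [_ [x [y [gy ->]]] | | x y _ gx _ gy | x _ gx].
- rewrite gconj_gcomm; apply: gen_in; exists (gconj x g), (gconj y g).
  by split; first exact: IH.
- by rewrite gconj1g; apply: gen_one.
- by rewrite gconjM; apply: gen_mul.
- by rewrite gconjV; apply: gen_inv.
Qed.

Lemma gamma_gpow_of_rel (a b : G) n :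
  gpow (gmul a (gcomm (gpow a n) b)) n = gone G -> forall k, gamma k (gpow a n).
Proof.
move=> rel; elim=> [|k an_k] //.
have u_k1 : gamma k.+1 (gcomm (gpow a n) b).
  by rewrite -ginv_gcomm; apply/gamma_inv/gamma_comm.
have [w w_k1 expand] := gpow_mulr_normal (gamma_one k.+1) (@gamma_mul k.+1)
  (@gamma_conj k.+1) a n u_k1.
rewrite rel in expand; rewrite -(ginvK (gpow a n)) (ginv_eq (esym expand)).
exact: gamma_inv.
Qed.

Lemma not_residually_nilpotent_of_rel (a b : G) n :
  gpow (gmul a (gcomm (gpow a n) b)) n = gone G -> gpow a n <> gone G ->
  ~ residually_nilpotent G.
Proof.
move=> rel an_neq1 RN; apply: an_neq1; apply: RN => k _.
exact: gamma_gpow_of_rel rel k.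
Qed.

End LowerCentralSeries.

Section Homomorphisms.
Variables (G H : group) (f : G -> H).
Hypothesis f_hom : is_hom f.

Lemma hom_one : f (gone G) = gone H.
Proof.
have idem : gmul (f (gone G)) (f (gone G)) = f (gone G) by rewrite -f_hom gmul1.
by rewrite -(gmulKg (f (gone G)) (f (gone G))) idem gmulV.
Qed.

Lemma hom_gpow x n : f (gpow x n) = gpow (f x) n.
Proof. by elim: n => [|n IH] /=; rewrite ?hom_one // f_hom IH. Qed.

End Homomorphisms.

Section Presentations.
Variables (G : group) (a b : G) (rels : list relator2).
Hypothesis presG : presents2 a b rels.

Lemma presents2_lift (H : group) (x y : H) :
  (forall r, List.In r rels -> r H x y = gone H) ->
  exists f : G -> H, is_hom f /\ f a = x /\ f b = y.
Proof. by move=> /presG.2 [f [f_hom [fa [fb _]]]]; exists f. Qed.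

Lemma presents2_gpow_neq1 (H : group) (x y : H) n :
  (forall r, List.In r rels -> r H x y = gone H) -> gpow x n <> gone H ->
  gpow a n <> gone G.
Proof.
move=> /presents2_lift [f [f_hom [fa _]]] xn_neq1 an1.
by apply: xn_neq1; rewrite -fa -hom_gpow // an1 hom_one.
Qed.

End Presentations.

Definition fin_group (T : finGroupType) : group :=
  @Group T (fun x y => x * y)%g 1%g (fun x => x^-1)%g (@mulgA T) (@mul1g T) (@mulVg T).

Section FinGroups.
Variable T : finGroupType.
Implicit Types x y : fin_group T.

Lemma gpowE x n : gpow x n = (x ^+ n)%g.
Proof. by elim: n => //= n ->; rewrite expgS. Qed.

Lemma gcommE x y : gcomm x y = [~ x, y]%g.
Proof. by rewrite /gcomm /commg /conjg /= !mulgA. Qed.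

End FinGroups.

Section AffinePermutations.
Local Open Scope ring_scope.
Variables (R : finComUnitRingType) (w : R).
Hypothesis w_unit : w \is a GRing.unit.

Definition shift : {perm R} := perm (addIr 1).
Definition dilation : {perm R} := perm (mulrI w_unit).

Lemma shiftX k v : (shift ^+ k)%g v = v + k%:R.
Proof.
elim: k v => [|k IH] v; first by rewrite expg0 perm1 addr0.
by rewrite expgSr permM IH permE -addrA -natr1.
Qed.

Lemma dilationX k v : (dilation ^+ k)%g v = w ^+ k * v.
Proof.
elim: k v => [|k IH] v; first by rewrite expg0 perm1 expr0 mul1r.
by rewrite expgSr permM IH permE mulrA -exprS.
Qed.

Lemma shiftX_neq1 n : (n%:R != 0 :> R) -> (shift ^+ n)%g != 1%g.
Proof. by apply: contraNneq => /permP /(_ 0); rewrite shiftX perm1 add0r => ->. Qed.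

Lemma dilationX_eq1 n : w ^+ n = 1 -> (dilation ^+ n)%g = 1%g.
Proof. by move=> wn1; apply/permP => v; rewrite dilationX wn1 mul1r perm1. Qed.

Lemma mul_shift_commg n : w * n%:R + 1 = n%:R ->
  (shift * [~ shift ^+ n, dilation])%g = 1%g.
Proof.
move=> wn; set x := shift; set y := dilation.
have commute : (x ^+ n * y * x = y * x ^+ n)%g.
  by apply/permP => v; rewrite !permM !permE !shiftX mulrDr -addrA wn.
have comm_x1 : ([~ x ^+ n, y] * x = 1)%g.
  by rewrite /commg /conjg -!mulgA (mulgA (x ^+ n)%g) commute mulKg mulVg.
by rewrite -(mulgK x (x * _)%g) -(mulgA x) comm_x1 mulg1 mulgV.
Qed.

End AffinePermutations.

Definition modulus n := (n ^ n - n.-1 ^ n)%N.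

Lemma modulusE n : (n ^ n = modulus n + n.-1 ^ n)%N.
Proof. by rewrite subnK //; case: n => //= n; rewrite leq_exp2r. Qed.

Lemma modulus_gt n : (1 < n)%N -> (n < modulus n)%N.
Proof.
case: n => [|q] //= q_gt0.
have lt_pow : (q ^ q < q.+1 ^ q)%N by rewrite ltn_exp2r.
have le_pow : (q.+1 <= q.+1 ^ q)%N by rewrite -{1}(expn1 q.+1) leq_pexp2l.
have := modulusE q.+1; rewrite /= !expnS; nia.
Qed.

Lemma coprime_modulus n : (0 < n)%N -> coprime (modulus n) n.
Proof.
move=> n_gt0; rewrite coprime_sym /coprime -dvdn1.
have cop : coprime n (n.-1 ^ n) by rewrite coprimeXr ?coprimenP.
rewrite -(eqP cop) dvdn_gcd dvdn_gcdl -(dvdn_addr _ (dvdn_gcdr _ _)) -modulusE.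
by rewrite dvdn_exp ?dvdn_gcdl.
Qed.

Section AffineModel.
Local Open Scope ring_scope.

Lemma affine_model_gpow_neq1 n : (1 < n)%N ->
  exists (H : group) (x y : H), [/\ gpow x n <> gone H, gpow y n = gone H
    & gmul x (gcomm (gpow x n) y) = gone H].
Proof.
move=> n_gt1; have n_gt0 := ltnW n_gt1; set m := modulus n.
have m_gt1 : (1 < m)%N by apply: ltn_trans n_gt1 (modulus_gt n_gt1).
have n_unit : (n%:R : 'Z_m) \is a GRing.unit by rewrite unitZpE // coprime_modulus.
have n_neq0 : (n%:R : 'Z_m) != 0.
  apply/eqP => /(congr1 val); rewrite /= val_Zp_nat // modn_small ?modulus_gt //.
  by move=> n0; move: n_gt0; rewrite n0.
pose w : 'Z_m := n.-1%:R / n%:R.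
have pow_eq : (n.-1 ^ n)%:R = (n ^ n)%:R :> 'Z_m.
  by rewrite modulusE natrD -(Zp_nat_mod m_gt1 m) modnn add0r.
have wn1 : w ^+ n = 1 by rewrite exprMn exprVn -!natrX pow_eq mulrV // natrX unitrX.
have w_unit : w \is a GRing.unit by rewrite -(unitrX_pos _ n_gt0) wn1 unitr1.
have wn : w * n%:R + 1 = n%:R by rewrite divrK // natr1 prednK.
exists (fin_group {perm 'Z_m}), (shift 'Z_m), (dilation w_unit).
rewrite !gpowE gcommE; split; first exact/eqP/shiftX_neq1.
  by apply: dilationX_eq1.
by apply: mul_shift_commg.
Qed.

End AffineModel.

Theorem mainTheorem11 (p : nat) (hp : prime p) (hodd : odd p)
  (G : group) (a b : G) (HG : presents2 a b [:: rel_G1 p; rel_b p])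
  (Q : group) (al be : Q) (HQ : presents2 al be [:: rel_a p; rel_b p]) :
  gpow a p <> gone G /\
  (exists phi : G -> Q, is_hom phi /\ phi a = al /\ phi b = be) /\
  (forall phi : G -> Q, is_hom phi -> phi a = al -> phi b = be ->
     exists g : G, g <> gone G /\ phi g = gone Q) /\
  ~ residually_nilpotent G.
Proof.
have ap_neq1 : gpow a p <> gone G.
  have [H [x [y [xp_neq1 yp1 rel_xy]]]] := affine_model_gpow_neq1 (prime_gt1 hp).
  have rels_xy r : List.In r [:: rel_G1 p; rel_b p] -> r H x y = gone H.
    by case=> [<- | [<- | []]] //; rewrite /rel_G1 rel_xy gpow1g.
  exact (presents2_gpow_neq1 HG rels_xy xp_neq1).
have alp1 : gpow al p = gone Q by apply: (HQ.1 (rel_a p)); left.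
have relG : gpow (gmul a (gcomm (gpow a p) b)) p = gone G by apply: (HG.1 (rel_G1 p)); left.
split=> //; split; [|split].
- apply: (presents2_lift HG) => r [<- | [<- | []]].
  + by rewrite /rel_G1 alp1 gcomm1g gmulg1.
  + by apply: (HQ.1 (rel_b p)); right; left.
- by move=> phi phi_hom phia _; exists (gpow a p); rewrite hom_gpow // phia.
- exact: not_residually_nilpotent_of_rel relG ap_neq1.
Qed.
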